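(* Let $m, n \in \mathbb N$, let $\mathcal M \subset M_m$ be a real vector subspace, and let $\phi \colon \mathcal M \to M_n$ be a real linear map such that $\phi(\mathcal M \cap \mathcal U_m) \subset \mathcal U_n$. Then for all $U, V \in \mathcal M \cap \mathcal U_m$: if $\operatorname{Re}(U^\ast V) = 0_m$, then $\operatorname{Re}(\phi(U)^\ast\phi(V)) = 0_n$.
   Context: $M_m$ is the set of $m\times m$ complex matrices, $\mathcal U_m$ the unitary ones, and $\operatorname{Re}A = \tfrac12(A+A^\ast)$. *)

From HB Require Import structures.
From mathcomp Require Import all_boot all_order all_algebra.
From mathcomp Require Import complex.
From mathcomp Require Import reals.
Set Implicit Arguments. Unset Strict Implicit. Unset Printing Implicit Defensive.
Import Order.TTheory GRing.Theory Num.Theory.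
Local Open Scope ring_scope.

Definition adjmx (R : realType) (m n : nat) (A : 'M[(complex R)]_(m, n)) : 'M[(complex R)]_(n, m) :=
  (map_mx (@conjc R) A)^T.

Definition Remx (R : realType) (m : nat) (A : 'M[(complex R)]_m) : 'M[(complex R)]_m :=
  (2%:R)^-1 *: (A + adjmx A).

Definition unitary_mx (R : realType) (m : nat) (U : 'M[(complex R)]_m) : Prop :=
  adjmx U *m U = 1%:M /\ U *m adjmx U = 1%:M.

Definition real_subspace (R : realType) (m : nat) (M : 'M[(complex R)]_m -> Prop) : Prop :=
  [/\ M 0,
      (forall A B, M A -> M B -> M (A + B)) &
      (forall (r : R) A, M A -> M ((r%:C)%C *: A))].

(* real linear map M -> M_n (only its values on M matter) *)
Definition real_linear_on (R : realType) (m n : nat) (M : 'M[(complex R)]_m -> Prop)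
  (phi : 'M[(complex R)]_m -> 'M[(complex R)]_n) : Prop :=
  (forall A B, M A -> M B -> phi (A + B) = phi A + phi B) /\
  (forall (r : R) A, M A -> phi ((r%:C)%C *: A) = (r%:C)%C *: phi A).

From HB Require Import structures.
From mathcomp Require Import all_boot all_order all_algebra.
From mathcomp Require Import complex.
From mathcomp Require Import reals.
Import Order.TTheory GRing.Theory Num.Theory.
Local Open Scope ring_scope.

(* For isometries X, Y one has ((X + Y)/√2)^* ((X + Y)/√2) = 1 + Re(X^* Y), so
   Re(X^* Y) = 0 exactly when (X + Y)/√2 is again an isometry.  For unitaries
   U, V in M with Re(U^* V) = 0, the matrix (U + V)/√2 thus lies in M ∩ U_m; phi
   maps it to (phi U + phi V)/√2, which is unitary by hypothesis, and the same
   equivalence applied to phi U, phi V gives Re(phi(U)^* phi(V)) = 0. *)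

Section Adjoint.
Context {R : realType}.
Local Notation C := (complex R).

Lemma adjmxD k l (A B : 'M[C]_(k, l)) : adjmx (A + B) = adjmx A + adjmx B.
Proof. by rewrite /adjmx map_mxD linearD. Qed.

Lemma adjmxZ_real k l (r : R) (A : 'M[C]_(k, l)) :
  adjmx ((r%:C)%C *: A) = (r%:C)%C *: adjmx A.
Proof.
by apply/matrixP=> i j; rewrite /adjmx !mxE rmorphM; congr (_ * _); apply: conjc_real.
Qed.

Lemma adjmxM k l p (A : 'M[C]_(k, l)) (B : 'M[C]_(l, p)) :
  adjmx (A *m B) = adjmx B *m adjmx A.
Proof. by rewrite /adjmx map_mxM trmx_mul. Qed.

Lemma adjmxK k l (A : 'M[C]_(k, l)) : adjmx (adjmx A) = A.
Proof. by apply/matrixP=> i j; rewrite /adjmx !mxE conjcK. Qed.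

Lemma unitary_mxP k (U : 'M[C]_k) : unitary_mx U <-> adjmx U *m U = 1%:M.
Proof. by split=> [[]//|UU]; split=> //; apply: mulmx1C. Qed.

Lemma adjmx_mulDD k l (X Y : 'M[C]_(k, l)) :
  adjmx (X + Y) *m (X + Y) =
  adjmx X *m X + adjmx Y *m Y + 2%:R *: Remx (adjmx X *m Y).
Proof.
rewrite /Remx scalerA mulfV ?pnatr_eq0 // scale1r adjmxM adjmxK.
rewrite adjmxD mulmxDl !mulmxDr.
by rewrite [adjmx Y *m X + _]addrC addrACA.
Qed.

Definition normalized_sum {k l} (X Y : 'M[C]_(k, l)) : 'M[C]_(k, l) :=
  ((Num.sqrt (2%:R : R))^-1%:C)%C *: (X + Y).

Lemma adjmx_mul_normalized_sum k l (X Y : 'M[C]_(k, l)) :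
  adjmx X *m X = 1%:M -> adjmx Y *m Y = 1%:M ->
  adjmx (normalized_sum X Y) *m normalized_sum X Y =
  1%:M + Remx (adjmx X *m Y).
Proof.
move=> XX YY; set s := (Num.sqrt (2%:R : R))^-1.
have s2 : ((s%:C)%C * (s%:C)%C : C) = 2%:R^-1.
  rewrite -rmorphM -invfM -expr2 sqr_sqrtr ?ler0n //.
  by rewrite rmorphV ?unitfE ?pnatr_eq0 // rmorph_nat.
have two : 1%:M + 1%:M = (2%:R : C) *: 1%:M :> 'M[C]_l by rewrite scaler_nat.
rewrite adjmxZ_real -scalemxAr -scalemxAl scalerA s2 adjmx_mulDD XX YY two.
by rewrite -scalerDr scalerA mulVf ?pnatr_eq0 // scale1r.
Qed.

Lemma isometry_normalized_sumE k l (X Y : 'M[C]_(k, l)) :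
  adjmx X *m X = 1%:M -> adjmx Y *m Y = 1%:M ->
  (adjmx (normalized_sum X Y) *m normalized_sum X Y == 1%:M) =
  (Remx (adjmx X *m Y) == 0).
Proof.
by move=> XX YY; rewrite adjmx_mul_normalized_sum // -subr_eq0 addrC addKr.
Qed.

End Adjoint.

Lemma normalized_sum_on {R : realType} {m n} {M : 'M[complex R]_m -> Prop}
    {phi : 'M[complex R]_m -> 'M[complex R]_n} {U V} :
  real_subspace M -> real_linear_on M phi -> M U -> M V ->
  M (normalized_sum U V) /\ phi (normalized_sum U V) = normalized_sum (phi U) (phi V).
Proof.
move=> [_ MD MZ] [phiD phiZ] MU MV.
by split; [apply/MZ/MD | rewrite /normalized_sum phiZ ?phiD //; apply: MD].
Qed.

Theorem corollary3p2 (R : realType) (m n : nat)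
  (M : 'M[(complex R)]_m -> Prop) (phi : 'M[(complex R)]_m -> 'M[(complex R)]_n) :
  real_subspace M ->
  real_linear_on M phi ->
  (forall U, M U -> unitary_mx U -> unitary_mx (phi U)) ->
  forall U V, M U -> unitary_mx U -> M V -> unitary_mx V ->
    Remx (adjmx U *m V) = 0 ->
    Remx (adjmx (phi U) *m phi V) = 0.
Proof.
move=> subM linphi phiU U V MU UU MV VV ReUV.
have [MW phiW] := normalized_sum_on subM linphi MU MV.
have [[PUU _] [PVV _]] := (phiU U MU UU, phiU V MV VV).
move: UU VV => [UU _] [VV _].
have Wu : unitary_mx (normalized_sum U V).
  by apply/unitary_mxP/eqP; rewrite isometry_normalized_sumE // ReUV.
have [+ _] := phiU _ MW Wu.
rewrite phiW => /eqP; rewrite isometry_normalized_sumE //; exact/eqP.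
Qed.
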